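(* Let $k,k'$ be arbitrary fields and $K|k$, $K'|k'$ field extensions of degree $\geq3$ (possibly infinite). Suppose $\varphi:K'^\times/k'^\times\to K^\times/k^\times$ is simultaneously a homomorphism of abelian groups and a projective embedding. Then there is a unique field homomorphism $\Phi:K'\to K$ lifting $\varphi$ (i.e. $\varphi(x\bmod k'^\times)=\Phi(x)\bmod k^\times$ for all $x\in K'^\times$) that restricts to an isomorphism $k'\cong k$.
   Context: For a vector space $V$ over a field $k$, its projectivisation $\mathbb P_kV=(V\setminus\{0\})/k^\times$ is regarded with the projective lines (images of $2$-dimensional subspaces) as distinguished subsets. $K^\times/k^\times=\mathbb P_kK$ with $K$ viewed as a $k$-vector space. A map $\mathbb P_{k'}V'\to\mathbb P_kV$ is a projective embedding if it is injective and maps lines onto lines. *)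

From HB Require Import structures.
From mathcomp Require Import all_boot all_order all_algebra.
Set Implicit Arguments. Unset Strict Implicit. Unset Printing Implicit Defensive.
Import GRing.Theory.
Local Open Scope ring_scope.
Local Open Scope quotient_scope.

(* A field extension K|k is represented by a field K together with a subfield
   k of K, given as a predicate on K closed under 1, -, * and inverses. *)
Section Proj.
Variables (K : fieldType) (k : divringClosed K).

Definition nzK := {x : K | x != 0}.
HB.instance Definition _ := Choice.on nzK.

Definition projrel (x y : nzK) : bool := (val x / val y \in k).

Lemma projrel_refl : reflexive projrel.
Proof. by case=> x /= nx; rewrite /projrel /= mulfV // rpred1. Qed.

Lemma projrel_sym : symmetric projrel.
Proof.
by case=> x nx [y ny]; rewrite /projrel /= -rpredV invf_div.
Qed.

Lemma projrel_trans : transitive projrel.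
Proof.
case=> y ny [x nx] [z nz]; rewrite /projrel /= => hxy hyz.
have -> : x / z = (x / y) * (y / z) by rewrite mulrA divfK.
exact: rpredM.
Qed.

Canonical projrel_equiv :=
  EquivRel projrel projrel_refl projrel_sym projrel_trans.

Definition Proj := {eq_quot projrel}.

Definition one_nz : nzK := exist _ 1 (oner_neq0 K).

(* class of a nonzero x in P_k K (junk value for x = 0) *)
Definition pcl (x : K) : Proj := \pi_Proj (insubd one_nz x).

Definition pmul (a b : Proj) : Proj := pcl (val (repr a) * val (repr b)).

Definition indep2 (u v : K) : Prop :=
  forall a b, a \in k -> b \in k -> a * u + b * v = 0 -> a = 0 /\ b = 0.

Definition indep3 (u v w : K) : Prop :=
  forall a b c, a \in k -> b \in k -> c \in k ->
    a * u + b * v + c * w = 0 -> [/\ a = 0, b = 0 & c = 0].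

Definition degree_ge3 : Prop := exists u v w, indep3 u v w.

Definition pline (u v : K) (p : Proj) : Prop :=
  exists a b, [/\ a \in k, b \in k, a * u + b * v != 0 & p = pcl (a * u + b * v)].

Definition is_line (S : Proj -> Prop) : Prop :=
  exists u v, indep2 u v /\ forall p, S p <-> pline u v p.

End Proj.

Section Maps.
Variables (K : fieldType) (k : divringClosed K) (K' : fieldType) (k' : divringClosed K').

Definition is_group_hom (phi : Proj k' -> Proj k) : Prop :=
  forall a b, phi (pmul a b) = pmul (phi a) (phi b).

Definition proj_embedding (phi : Proj k' -> Proj k) : Prop :=
  injective phi /\
  forall S, is_line S -> is_line (fun q => exists p, S p /\ q = phi p).

Definition lifts (phi : Proj k' -> Proj k) (Phi : K' -> K) : Prop :=
  forall x, x != 0 -> phi (pcl k' x) = pcl k (Phi x).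

Definition restricts_iso (Phi : K' -> K) : Prop :=
  (forall x, x \in k' -> Phi x \in k) /\
  (forall y, y \in k -> exists2 x, x \in k' & Phi x = y).
End Maps.

From HB Require Import structures.
From mathcomp Require Import all_boot all_order all_algebra.
From mathcomp Require Import ring.
From Stdlib Require Import Classical ClassicalEpsilon.
Set Implicit Arguments. Unset Strict Implicit. Unset Printing Implicit Defensive.
Import GRing.Theory.
Local Open Scope ring_scope.
Local Open Scope quotient_scope.

(* Call [X] a lift of [x] when [phi] sends the class of [x] to the class of [X];
   two lifts of [x] differ by a factor in [k^x].  For [x \notin k'] normalise the
   lift [X] of [x] by asking that [1 + X] lift [1 + x].  If [1, v, w] are
   independent over [k'], the images of the lines [(1 + v, w)] and [(1 + w, v)]
   meet in the image of [1 + v + w], and those of [(v, w)] and [(1, 1 + v + w)]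
   in the image of [v + w]; comparing coordinates shows that normalised lifts add.
   A third independent direction, which exists because the degree is at least 3,
   reduces every other sum to this case, and translating by [k'] extends the
   normalised lift to an additive map [Phi].  The homomorphism property makes
   [Phi] multiplicative, and comparing the lifts of [x] and [1 + x] shows that
   every ring homomorphism lifting [phi] equals [Phi]. *)

Section Projectivisation.
Context {F : fieldType} {s : divringClosed F}.
Local Notation P := (pcl s).

Lemma pcl_eq x y : x != 0 -> y != 0 -> P x = P y <-> x / y \in s.
Proof.
move=> x0 y0; rewrite /pcl; split => [/eqquotP | h].
  by rewrite /= /projrel !insubdK.
by apply/eqquotP; rewrite /= /projrel !insubdK.
Qed.

Lemma pcl_eqE x y : x != 0 -> y != 0 -> P x = P y ->
  exists c, [/\ c \in s, c != 0 & x = c * y].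
Proof.
move=> x0 y0 /(pcl_eq x0 y0) xy; exists (x / y); split => //.
  by rewrite mulf_neq0 ?invr_eq0.
by rewrite divfK.
Qed.

Lemma pcl_scale c y : c \in s -> c != 0 -> y != 0 -> P (c * y) = P y.
Proof. by move=> cs c0 y0; apply/pcl_eq; rewrite ?mulf_neq0 ?mulfK. Qed.

Lemma pcl_scalar a : a \in s -> a != 0 -> P a = P 1.
Proof. by move=> a_s a0; apply/pcl_eq; rewrite ?oner_neq0 ?divr1. Qed.

Lemma pcl_repr (a : Proj s) : exists2 x, x != 0 & a = P x.
Proof. by exists (val (repr a)); rewrite ?(valP (repr a)) // /pcl valKd reprK. Qed.

Lemma pmulE x y : x != 0 -> y != 0 -> pmul (P x) (P y) = P (x * y).
Proof.
move=> x0 y0; rewrite /pmul.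
have reprP z : z != 0 -> val (repr (P z)) / z \in s.
  move=> z0; apply/pcl_eq => //; first exact: valP (repr (P z)).
  by rewrite /pcl valKd reprK.
have [x'0 y'0] := (valP (repr (P x)), valP (repr (P y))).
apply/pcl_eq; rewrite ?mulf_neq0 //.
rewrite invfM mulrACA.
by rewrite rpredM ?reprP.
Qed.

Lemma indep2_neq0 u v : indep2 s u v -> u != 0 /\ v != 0.
Proof.
move=> uv; split; apply/eqP => e0.
  have [] := uv 1 0 (rpred1 _) (rpred0 _); first by rewrite e0 mulr0 mul0r addr0.
  by move/eqP; rewrite oner_eq0.
have [] := uv 0 1 (rpred0 _) (rpred1 _); first by rewrite e0 mulr0 mul0r addr0.
by move=> _ /eqP; rewrite oner_eq0.
Qed.

Lemma indep2_coefE u v a b a' b' : indep2 s u v ->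
  a \in s -> b \in s -> a' \in s -> b' \in s ->
  a * u + b * v = a' * u + b' * v -> a = a' /\ b = b'.
Proof.
move=> uv ha hb ha' hb' e.
have [] := uv (a - a') (b - b') (rpredB ha ha') (rpredB hb hb').
  by apply/eqP; rewrite !mulrBl addrACA -opprD e subrr.
by move=> /eqP; rewrite subr_eq0 => /eqP -> /eqP; rewrite subr_eq0 => /eqP ->.
Qed.

Lemma indep2_sum_scale u v c d : indep2 s u v -> c \in s -> d \in s ->
  u + c * v = d * (u + v) -> c = 1.
Proof.
move=> uv cs ds e.
have [d1 cd] : 1 = d /\ c = d.
  by apply: (indep2_coefE uv) => //; rewrite ?rpred1 // mul1r e mulrDr.
by rewrite cd -d1.
Qed.

Lemma indep2_sym u v : indep2 s u v -> indep2 s v u.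
Proof. by move=> uv a b a_s bs e; have [] := uv b a bs a_s; rewrite // addrC. Qed.

Lemma indep2_addl u v : indep2 s u v -> indep2 s (u + v) v.
Proof.
move=> uv a b a_s bs e; have [] := uv a (a + b) a_s (rpredD a_s bs).
  by rewrite -e; ring.
by move=> a0; rewrite a0 add0r.
Qed.

Lemma indep2_addr u v : indep2 s u v -> indep2 s u (u + v).
Proof. by move=> uv; rewrite addrC; apply/indep2_sym/indep2_addl/indep2_sym. Qed.

Lemma indep2_add_neq0 u v : indep2 s u v -> u + v != 0.
Proof.
move=> uv; apply/eqP => e0; have [] := uv 1 1 (rpred1 _) (rpred1 _).
  by rewrite !mul1r.
by move/eqP; rewrite oner_eq0.
Qed.

Lemma indep2_pcl_neq u v : indep2 s u v -> P u != P v.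
Proof.
move=> uv; have [u0 v0] := indep2_neq0 uv.
apply/eqP => /(pcl_eqE u0 v0) [c [cs _ ucv]].
have [] := uv 1 (- c) (rpred1 _) (rpredNr cs); first by rewrite ucv mul1r mulNr subrr.
by move/eqP; rewrite oner_eq0.
Qed.

Lemma pcl_neq_indep2 u v : u != 0 -> v != 0 -> P u != P v -> indep2 s u v.
Proof.
move=> u0 v0 uv a b a_s bs e.
have [a0 | a0] := eqVneq a 0.
  by move: e; rewrite a0 mul0r add0r => /eqP; rewrite mulf_eq0 (negbTE v0) orbF => /eqP.
have au : a * u = - (b * v) by apply/eqP; rewrite -addr_eq0 e.
case/eqP: uv; apply/(pcl_eq u0 v0).
have -> : u / v = - (b / a) by rewrite -(mulKf a0 u) au; field; rewrite v0 a0.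
by rewrite rpredN rpred_div.
Qed.

Lemma notin_neq0 x : x \notin s -> x != 0.
Proof. by apply: contraNneq => ->; rewrite rpred0. Qed.

Lemma indep2_1E x : indep2 s 1 x <-> x \notin s.
Proof.
split=> [h | xs a b a_s bs e].
  apply/negP => xs; have [] := h x (-1) xs (rpredNr (rpred1 _)).
    by rewrite mulr1 mulN1r subrr.
  by move=> _ /eqP; rewrite oppr_eq0 oner_eq0.
have [b0 | b0] := eqVneq b 0; first by move: e; rewrite b0 mul0r addr0 mulr1.
have bx : b * x = - a by apply/eqP; rewrite -addr_eq0 addrC -e mulr1.
case/negP: xs; have -> : x = - (a / b) by rewrite -(mulKf b0 x) bx; field.
by rewrite rpredN rpred_div.
Qed.

Lemma indep3_indep2 u v w : indep3 s u v w -> indep2 s u v.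
Proof.
move=> h a b a_s bs e; have [] := h a b 0 a_s bs (rpred0 _) => //.
by rewrite mul0r addr0.
Qed.

Lemma indep3_perm12 u v w : indep3 s u v w -> indep3 s v u w.
Proof.
move=> h a b c a_s bs cs e; have [] := h b a c bs a_s cs => //.
by rewrite (addrC (b * u)).
Qed.

Lemma indep3_perm23 u v w : indep3 s u v w -> indep3 s u w v.
Proof.
move=> h a b c a_s bs cs e; have [] := h a c b a_s cs bs => //.
by rewrite -addrA (addrC (c * v)) addrA.
Qed.

Lemma indep3_replace u v w x p q r : indep3 s u v w ->
  p \in s -> q \in s -> r \in s -> r != 0 -> x = p * u + q * v + r * w ->
  indep3 s u v x.
Proof.
move=> h ps qs rs r0 -> a b c a_s bs cs e.
have [] := h (a + c * p) (b + c * q) (c * r); rewrite ?rpredD ?rpredM //.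
  by rewrite -e; ring.
move=> a0 b0 /eqP; rewrite mulf_eq0 (negbTE r0) orbF => /eqP c0.
by move: a0 b0; rewrite c0 !mul0r !addr0.
Qed.

Lemma indep3_indep2_addl u v w : indep3 s u v w -> indep2 s (u + v) w.
Proof.
move=> h a b a_s bs e; have [] := h a a b a_s a_s bs => //.
by rewrite -e; ring.
Qed.

Lemma indep3_indep2_add3 u v w : indep3 s u v w -> indep2 s (u + w) (v + w).
Proof.
move=> h a b a_s bs e; have [] := h a b (a + b) a_s bs (rpredD a_s bs) => //.
by rewrite -e; ring.
Qed.

Lemma indep3_comb_neq0 u v w a b c : indep3 s u v w ->
  a \in s -> b \in s -> c \in s -> a != 0 -> a * u + b * v + c * w != 0.
Proof.
move=> h a_s bs cs; apply: contra_neq => e.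
by have [] := h _ _ _ a_s bs cs e.
Qed.

Lemma indep3_sum_neq0 u v w : indep3 s u v w -> u + v + w != 0.
Proof.
by move=> h; have := indep3_comb_neq0 h (rpred1 _) (rpred1 _) (rpred1 _) (oner_neq0 _);
  rewrite !mul1r.
Qed.

Lemma pcl_coef3 u v w a b c a' b' c' : indep3 s u v w ->
  a \in s -> b \in s -> c \in s -> a' \in s -> b' \in s -> c' \in s ->
  a * u + b * v + c * w != 0 -> a' * u + b' * v + c' * w != 0 ->
  P (a * u + b * v + c * w) = P (a' * u + b' * v + c' * w) ->
  exists2 d, d != 0 & [/\ a = d * a', b = d * b' & c = d * c'].
Proof.
move=> h a_s bs cs a's b's c's n n' /(pcl_eqE n n') [d [ds d0 e]].
exists d => //.
have [] := h (a - d * a') (b - d * b') (c - d * c'); rewrite ?rpredB ?rpredM //.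
  rewrite -[RHS](subrr (a * u + b * v + c * w)) {2}e; ring.
by move=> /eqP; rewrite subr_eq0 => /eqP -> /eqP; rewrite subr_eq0 => /eqP ->
  /eqP; rewrite subr_eq0 => /eqP ->.
Qed.

Definition in_span2 u v x := exists a b, [/\ a \in s, b \in s & x = a * u + b * v].

Lemma in_span2_l u v : in_span2 u v u.
Proof. by exists 1, 0; rewrite mul1r mul0r addr0 rpred1 rpred0. Qed.

Lemma in_span2_r u v : in_span2 u v v.
Proof. by exists 0, 1; rewrite mul1r mul0r add0r rpred1 rpred0. Qed.

Lemma in_span2_add u v : in_span2 u v (u + v).
Proof. by exists 1, 1; rewrite !mul1r rpred1. Qed.

Lemma in_span2D u v x y : in_span2 u v x -> in_span2 u v y -> in_span2 u v (x + y).
Proof.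
move=> [a [b [a_s bs ->]]] [c [d [cs ds ->]]].
by exists (a + c), (b + d); rewrite !rpredD //; split=> //; ring.
Qed.

Lemma in_span2_trans u v u' v' x : in_span2 u' v' u -> in_span2 u' v' v ->
  in_span2 u v x -> in_span2 u' v' x.
Proof.
move=> [a1 [b1 [a1s b1s ->]]] [a2 [b2 [a2s b2s ->]]] [a [b [a_s bs ->]]].
exists (a * a1 + b * a2), (a * b1 + b * b2); split; rewrite ?rpredD ?rpredM //.
ring.
Qed.

Lemma in_span2_pline u v x : in_span2 u v x -> x != 0 -> pline (k:=s) u v (P x).
Proof. by move=> [a [b [a_s bs ->]]] x0; exists a, b. Qed.

Lemma pline_in_span2 u v x : x != 0 -> pline (k:=s) u v (P x) -> in_span2 u v x.
Proof.
move=> x0 [a [b [a_s bs n /(pcl_eqE x0 n) [c [cs _ ->]]]]].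
by exists (c * a), (c * b); rewrite !rpredM //; split=> //; ring.
Qed.

Lemma pline_in_span u v u' v' q : in_span2 u' v' u -> in_span2 u' v' v ->
  pline (k:=s) u v q -> pline (k:=s) u' v' q.
Proof.
move=> su sv [a [b [a_s bs n ->]]]; apply: in_span2_pline n.
by apply: in_span2_trans su sv _; exists a, b.
Qed.

Lemma not_indep3_span u v w : indep2 s u v -> ~ indep3 s u v w -> in_span2 u v w.
Proof.
move=> uv nind; apply: NNPP => nspan; apply: nind => a b c a_s bs cs e.
have [c0 | c0] := eqVneq c 0.
  by have [] := uv a b a_s bs; rewrite // -e c0 mul0r addr0.
case: nspan; exists (- (a / c)), (- (b / c)); rewrite !rpredN !rpred_div //.
split=> //; rewrite -[w](mulKf c0) -[c * w](addKr (a * u + b * v)) e; field.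
by rewrite c0.
Qed.

Lemma in_span2_swap u v u' v' : indep2 s u v ->
  in_span2 u' v' u -> in_span2 u' v' v -> in_span2 u v u' /\ in_span2 u v v'.
Proof.
move=> uv [a1 [b1 [a1s b1s eu]]] [a2 [b2 [a2s b2s ev]]].
pose d := a1 * b2 - a2 * b1.
have ds : d \in s by rewrite rpredB ?rpredM.
have d0 : d != 0.
  apply/eqP => d0; have [u0 _] := indep2_neq0 uv.
  have [b20 b10] : b2 = 0 /\ - b1 = 0.
    by apply: uv; rewrite ?rpredNr // eu ev -(mul0r u') -d0 /d; ring.
  have [a20 a10] : a2 = 0 /\ - a1 = 0.
    by apply: uv; rewrite ?rpredNr // eu ev -(mul0r v') -oppr0 -d0 /d; ring.
  by move: u0; rewrite eu -(opprK a1) -(opprK b1) a10 b10 oppr0 !mul0r addr0 eqxx.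
split.
  exists (b2 / d), (- (b1 / d)); rewrite rpredN !rpred_div //.
  by split=> //; rewrite eu ev /d; field.
exists (- (a2 / d)), (a1 / d); rewrite rpredN !rpred_div //.
by split=> //; rewrite eu ev /d; field.
Qed.

Lemma pline_span_eq u v u' v' : indep2 s u v ->
  in_span2 u' v' u -> in_span2 u' v' v ->
  forall q, pline (k:=s) u v q <-> pline (k:=s) u' v' q.
Proof.
move=> uv su sv q; have [su' sv'] := in_span2_swap uv su sv.
by split; apply: pline_in_span.
Qed.

Lemma span2_not_indep3 u v x y z : in_span2 u v x -> in_span2 u v y ->
  in_span2 u v z -> ~ indep3 s x y z.
Proof.
move=> sx sy sz h; have [su sv] := in_span2_swap (indep3_indep2 h) sx sy.
have [a [b [a_s bs ez]]] := in_span2_trans su sv sz.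
have [] := h a b (-1) a_s bs (rpredNr (rpred1 _)); first by rewrite ez mulN1r subrr.
by move=> _ _ /eqP; rewrite oppr_eq0 oner_eq0.
Qed.

Lemma pline_meet_sum3 u v w q : indep3 s u v w ->
  pline (k:=s) (u + v) w q -> pline (k:=s) (u + w) v q -> q = P (u + v + w).
Proof.
move=> h [a [b [a_s bs n1 ->]]] [c [d [cs ds n2 e]]].
have E1 : a * (u + v) + b * w = a * u + a * v + b * w by ring.
have E2 : c * (u + w) + d * v = c * u + d * v + c * w by ring.
rewrite E1 in n1 e *; rewrite E2 in n2 e.
have [x _ [ac ad bc]] := pcl_coef3 h a_s a_s bs cs ds cs n1 n2 e.
have ba : b = a by rewrite bc ac.
have a0 : a != 0 by apply: contraNneq n1 => a0; rewrite ba a0 !mul0r !addr0.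
by rewrite ba -!mulrDr pcl_scale // indep3_sum_neq0.
Qed.

Lemma pline_meet_sum2 u v w q : indep3 s u v w ->
  pline (k:=s) v w q -> pline (k:=s) u (u + v + w) q -> q = P (v + w).
Proof.
move=> h [a [b [a_s bs n1 ->]]] [c [d [cs ds n2 e]]].
have E1 : a * v + b * w = 0 * u + a * v + b * w by ring.
have E2 : c * u + d * (u + v + w) = (c + d) * u + d * v + d * w by ring.
rewrite E1 in n1 e *; rewrite E2 in n2 e.
have [x _ [_ ad bd]] := pcl_coef3 h (rpred0 _) a_s bs (rpredD cs ds) ds ds n1 n2 e.
have ba : b = a by rewrite bd ad.
have a0 : a != 0 by apply: contraNneq n1 => a0; rewrite ba a0 !mul0r !addr0.
have vw0 : v + w != 0.
  by apply: indep2_add_neq0; apply: indep3_indep2; apply: indep3_perm23 (indep3_perm12 h).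
by rewrite ba mul0r add0r -mulrDr pcl_scale.
Qed.

Lemma pline_meet_diff u v w q : indep3 s u v w ->
  pline (k:=s) u v q -> pline (k:=s) (u + w) (v + w) q -> q = P (u - v).
Proof.
move=> h [a [b [a_s bs n1 ->]]] [c [d [cs ds n2 e]]].
have E1 : a * u + b * v = a * u + b * v + 0 * w by ring.
have E2 : c * (u + w) + d * (v + w) = c * u + d * v + (c + d) * w by ring.
rewrite E1 in n1 e *; rewrite E2 in n2 e.
have [x x0 [ac bd /esym/eqP]] := pcl_coef3 h a_s bs (rpred0 _) cs ds (rpredD cs ds) n1 n2 e.
rewrite mulf_eq0 (negbTE x0) /= addr_eq0 => /eqP dc.
have ba : b = - a by rewrite ac dc mulrN opprK bd.
have a0 : a != 0 by apply: contraNneq n1 => a0; rewrite ba a0 oppr0 !mul0r !addr0.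
have uv0 : u - v != 0.
  have := indep3_comb_neq0 h (rpred1 _) (rpredNr (rpred1 _)) (rpred0 _) (oner_neq0 _).
  by rewrite mul1r mulN1r mul0r addr0.
by rewrite ba mul0r addr0 mulNr -mulrBr pcl_scale.
Qed.

Lemma indep3_1_notin v w : indep3 s 1 v w -> v \notin s /\ w \notin s.
Proof.
by move=> h; split; apply/indep2_1E; [apply: indep3_indep2 h |
  apply: indep3_indep2 (indep3_perm23 h)].
Qed.

Lemma indep3_1_add_notin v w : indep3 s 1 v w -> v + w \notin s.
Proof.
move=> h; have [] := @indep3_1_notin v (v + w); last by [].
by apply: indep3_replace h (rpred0 _) (rpred1 _) (rpred1 _) (oner_neq0 _) _; ring.
Qed.

Lemma indep3_1_span v w x : indep3 s 1 v w -> x \notin s -> in_span2 1 v x ->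
  indep3 s 1 x w.
Proof.
move=> h xn [p [q [ps qs ex]]].
have q0 : q != 0 by apply: contraNneq xn => q0; rewrite ex q0 mul0r addr0 rpredM ?rpred1.
apply: indep3_perm23; apply: indep3_replace (indep3_perm23 h) ps (rpred0 _) qs q0 _.
by rewrite ex; ring.
Qed.

Lemma degree_ge3_notin : degree_ge3 s -> exists t, t \notin s.
Proof.
move=> [u1 [u2 [u3 h]]]; apply: NNPP => all_in.
have in_s t : in_span2 1 1 t.
  exists t, 0; rewrite mulr1 mul0r addr0 rpred0; split=> //.
  by apply: NNPP => /negP tn; apply: all_in; exists t.
exact: span2_not_indep3 (in_s u1) (in_s u2) (in_s u3) h.
Qed.

Lemma degree_ge3_indep3_1 v : degree_ge3 s -> v \notin s -> exists z, indep3 s 1 v z.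
Proof.
move=> [u1 [u2 [u3 h]]] vn; apply: NNPP => nz.
have in_span z : in_span2 1 v z.
  by apply: not_indep3_span; [exact/indep2_1E | move=> hz; apply: nz; exists z].
exact: span2_not_indep3 (in_span u1) (in_span u2) (in_span u3) h.
Qed.

End Projectivisation.

Section Lifting.
Variables (K : fieldType) (k : divringClosed K) (K' : fieldType) (k' : divringClosed K').
Variable phi : Proj k' -> Proj k.
Hypothesis phiM : is_group_hom phi.
Hypothesis phi_emb : proj_embedding phi.
Local Notation P := (pcl k).
Local Notation P' := (pcl k').

Definition is_lift x X := X != 0 /\ phi (P' x) = P X.

Lemma phi_inj : injective phi.
Proof. by case: phi_emb. Qed.

Lemma is_lift_exists x : exists X, is_lift x X.
Proof. by have [X X0 ex] := pcl_repr (phi (P' x)); exists X. Qed.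

Lemma is_lift_proportional x X Y : is_lift x X -> is_lift x Y ->
  exists c, [/\ c \in k, c != 0 & X = c * Y].
Proof. by move=> [X0 hX] [Y0 hY]; apply: pcl_eqE; rewrite -?hX. Qed.

Lemma is_lift_scale x X c : is_lift x X -> c \in k -> c != 0 -> is_lift x (c * X).
Proof. by move=> [X0 hX] cs c0; rewrite /is_lift mulf_neq0 // pcl_scale. Qed.

Lemma is_liftM x y X Y : x != 0 -> y != 0 -> is_lift x X -> is_lift y Y ->
  is_lift (x * y) (X * Y).
Proof.
move=> x0 y0 [X0 hX] [Y0 hY]; split; first by rewrite mulf_neq0.
by rewrite -pmulE // phiM hX hY pmulE.
Qed.

Lemma is_lift1 : is_lift 1 1.
Proof.
have [X hX] := is_lift_exists 1; have [X0 h1] := hX.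
have [_] := is_liftM (oner_neq0 _) (oner_neq0 _) hX hX.
rewrite mulr1 h1 => /(pcl_eq X0 (mulf_neq0 X0 X0)).
rewrite invfM mulrA divff // mul1r rpredV => Xk.
by split; rewrite ?oner_neq0 // h1 pcl_scalar.
Qed.

Lemma is_lift_scalar a : a \in k' -> a != 0 -> is_lift a 1.
Proof. by move=> a_s a0; rewrite /is_lift pcl_scalar //; apply: is_lift1. Qed.

Lemma lift_indep2 x y X Y : is_lift x X -> is_lift y Y -> P' x != P' y ->
  indep2 k X Y.
Proof.
move=> [X0 hX] [Y0 hY] xy; apply: pcl_neq_indep2 => //.
by rewrite -hX -hY; apply: contra_neq xy => /phi_inj.
Qed.

Lemma phi_pline u v U V : indep2 k' u v -> is_lift u U -> is_lift v V ->
  forall q, (exists p, pline u v p /\ q = phi p) <-> pline (k:=k) U V q.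
Proof.
move=> uv hU hV; have [u0 v0] := indep2_neq0 uv.
case: phi_emb => _ /(_ (pline (k:=k') u v)) [].
  by exists u, v.
move=> U' [V' [_ img]] q.
have in_img x X : in_span2 (s:=k') u v x -> x != 0 -> is_lift x X ->
    in_span2 (s:=k) U' V' X.
  move=> sx x0 [X0 hX]; apply: pline_in_span2 => //; apply/img.
  by exists (P' x); rewrite hX; split=> //; apply: in_span2_pline.
have UV := lift_indep2 hU hV (indep2_pcl_neq uv).
have sU := in_img u U (in_span2_l u v) u0 hU.
have sV := in_img v V (in_span2_r u v) v0 hV.
by rewrite img (pline_span_eq UV sU sV).
Qed.

Lemma is_lift_pline u v U V p : indep2 k' u v -> is_lift u U -> is_lift v V ->
  pline u v p -> pline (k:=k) U V (phi p).
Proof. by move=> uv hU hV pp; apply/(phi_pline uv hU hV); exists p. Qed.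

Lemma lift_indep3 u v w U V W : indep3 k' u v w ->
  is_lift u U -> is_lift v V -> is_lift w W -> indep3 k U V W.
Proof.
move=> h hU hV [W0 hW]; have uv := indep3_indep2 h.
have UV := lift_indep2 hU hV (indep2_pcl_neq uv).
apply: NNPP => /(not_indep3_span UV) /in_span2_pline /(_ W0).
move=> /(phi_pline uv hU hV) [p [pp]]; rewrite -hW => /phi_inj ep.
have w0 : w != 0 by have [] := indep2_neq0 (indep3_indep2 (indep3_perm23 h)).
have sw : in_span2 (s:=k') u v w by apply: pline_in_span2; rewrite ?ep.
exact: span2_not_indep3 (in_span2_l u v) (in_span2_r u v) sw h.
Qed.

Definition coherent u v U V := [/\ is_lift u U, is_lift v V & is_lift (u + v) (U + V)].

Lemma coherent_uniq u v U V V' : indep2 k' u v ->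
  coherent u v U V -> coherent u v U V' -> V' = V.
Proof.
move=> uv [hU hV huv] [_ hV' huv'].
have UV := lift_indep2 hU hV (indep2_pcl_neq uv).
have [c [cs _ eV]] := is_lift_proportional hV' hV.
have [d [ds _ e]] := is_lift_proportional huv' huv.
by rewrite eV in e *; rewrite (indep2_sum_scale UV cs ds e) mul1r.
Qed.

Lemma coherent_exists u v U : indep2 k' u v -> is_lift u U -> exists V, coherent u v U V.
Proof.
move=> uv hU; have [V0 hV0] := is_lift_exists v.
have [a [b [a_s bs n e]]] : pline (k:=k) U V0 (phi (P' (u + v))).
  exact: is_lift_pline uv hU hV0 (in_span2_pline (in_span2_add u v) (indep2_add_neq0 uv)).
have hab : is_lift (u + v) (a * U + b * V0) by [].
have [[U0 eU] [V00 eV0]] := (hU, hV0).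
have a0 : a != 0.
  apply: contra_neq (indep2_pcl_neq (indep2_addl uv)) => a0; apply: phi_inj.
  have b0 : b != 0 by apply: contraNneq n => b0; rewrite a0 b0 !mul0r addr0.
  by rewrite e eV0 a0 mul0r add0r pcl_scale.
have b0 : b != 0.
  apply: contra_neq (indep2_pcl_neq (indep2_addr uv)) => b0; apply: phi_inj.
  by rewrite e eU b0 mul0r addr0 pcl_scale.
exists (b / a * V0); split=> //.
  by apply: is_lift_scale hV0 _ _; rewrite ?rpred_div ?mulf_neq0 ?invr_eq0.
have -> : U + b / a * V0 = a^-1 * (a * U + b * V0) by field.
by apply: is_lift_scale hab _ _; rewrite ?rpredV ?invr_eq0.
Qed.

Lemma coherent_add u v w U V W : indep3 k' u v w ->
  coherent u v U V -> coherent u w U W -> coherent u (v + w) U (V + W).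
Proof.
move=> h [hU hV huv] [_ hW huw]; have UVW := lift_indep3 h hU hV hW.
have [u0 _] := indep2_neq0 (indep3_indep2 h).
have vw := indep3_indep2 (indep3_perm23 (indep3_perm12 h)).
have u_uvw : indep2 k' u (u + v + w).
  have : indep3 k' u v (u + v + w).
    by apply: indep3_replace h (rpred1 _) (rpred1 _) (rpred1 _) (oner_neq0 _) _; ring.
  by move/indep3_perm23/indep3_indep2.
have huvw : is_lift (u + v + w) (U + V + W).
  split; first exact: indep3_sum_neq0 UVW.
  apply: (pline_meet_sum3 UVW).
    apply: is_lift_pline huv hW _; first exact: indep3_indep2_addl.
    by apply: in_span2_pline (in_span2_add _ _) (indep3_sum_neq0 h).
  have -> : u + v + w = u + w + v by ring.
  apply: is_lift_pline huw hV _; first exact: indep3_indep2_addl (indep3_perm23 h).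
  apply: in_span2_pline (in_span2_add _ _) _.
  by rewrite -addrA (addrC w) addrA (indep3_sum_neq0 h).
have hvw : is_lift (v + w) (V + W).
  split; first exact: indep2_add_neq0 (indep3_indep2 (indep3_perm23 (indep3_perm12 UVW))).
  apply: (pline_meet_sum2 UVW).
    exact: is_lift_pline vw hV hW (in_span2_pline (in_span2_add _ _) (indep2_add_neq0 vw)).
  apply: is_lift_pline u_uvw hU huvw (in_span2_pline _ (indep2_add_neq0 vw)).
  by exists (-1), 1; rewrite rpredN rpred1; split=> //; ring.
by split=> //; rewrite !addrA.
Qed.

Section NormalisedLift.
Hypothesis hdeg' : degree_ge3 k'.

(* On [k'] the normalising condition does not determine [nlift x]. *)
Definition nlift x : K := epsilon (inhabits 0) (fun V => coherent 1 x 1 V).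

Lemma nliftP x : x \notin k' -> coherent 1 x 1 (nlift x).
Proof.
move=> xn; apply: (epsilon_spec (inhabits 0) (fun V => coherent 1 x 1 V)).
exact: coherent_exists (proj2 (indep2_1E x) xn) is_lift1.
Qed.

Lemma is_lift_nlift x : x \notin k' -> is_lift x (nlift x).
Proof. by case/nliftP. Qed.

Lemma nliftD v w : indep3 k' 1 v w -> nlift (v + w) = nlift v + nlift w.
Proof.
move=> h; have [vn wn] := indep3_1_notin h; have vwn := indep3_1_add_notin h.
apply: esym; apply: (coherent_uniq (proj2 (indep2_1E _) vwn) (nliftP vwn)).
exact: coherent_add h (nliftP vn) (nliftP wn).
Qed.

Lemma nlift_translate_indep a w w' : a \in k' -> indep3 k' 1 w w' ->
  nlift (a + w) - nlift w = nlift (a + w') - nlift w'.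
Proof.
move=> a_s h; have [wn w'n] := indep3_1_notin h.
have shift v v' : indep3 k' 1 v v' -> nlift (a + v + v') = nlift (a + v) + nlift v'.
  move=> hv; have [vn _] := indep3_1_notin hv.
  apply: nliftD; apply: indep3_1_span hv _ _; first by rewrite rpredDl.
  by exists a, 1; rewrite mulr1 mul1r rpred1.
have := shift w' w (indep3_perm23 h); rewrite (addrAC a) (shift w w' h) => e.
transitivity (nlift (a + w) + nlift w' - nlift w - nlift w'); first ring.
by rewrite e; ring.
Qed.

Lemma nlift_translate a w w' : a \in k' -> w \notin k' -> w' \notin k' ->
  nlift (a + w) - nlift w = nlift (a + w') - nlift w'.
Proof.
move=> a_s wn w'n; have [hind | hdep] := classic (indep3 k' 1 w w').
  exact: nlift_translate_indep.
have [z wz] := degree_ge3_indep3_1 hdeg' wn.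
have w'z : indep3 k' 1 w' z.
  by apply: indep3_1_span wz w'n _; apply: not_indep3_span hdep; apply/indep2_1E.
by rewrite (nlift_translate_indep a_s wz) (nlift_translate_indep a_s w'z).
Qed.

(* The point [a] lies on the lines through [a + w, w] and through
   [a + w + z, w + z]; their images meet at [nlift (a + w) - nlift w]. *)
Lemma nlift_translate_scalar a w : a \in k' -> a != 0 -> w \notin k' ->
  nlift (a + w) - nlift w \in k /\ nlift (a + w) - nlift w != 0.
Proof.
move=> a_s a0 wn; have [z wz] := degree_ge3_indep3_1 hdeg' wn.
have [_ zn] := indep3_1_notin wz.
have awn : a + w \notin k' by rewrite rpredDl.
have h : indep3 k' (a + w) w z.
  have : indep3 k' w z (a + w).
    have wz1 := indep3_perm23 (indep3_perm12 wz).
    by apply: indep3_replace wz1 (rpred1 _) (rpred0 _) a_s a0 _; ring.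
  by move/indep3_perm23/indep3_perm12.
have awz : indep3 k' 1 (a + w) z.
  by apply: indep3_1_span wz awn _; exists a, 1; rewrite mulr1 mul1r rpred1.
have hA := is_lift_nlift awn; have hW := is_lift_nlift wn; have hZ := is_lift_nlift zn.
have AWZ := lift_indep3 h hA hW hZ.
have hAZ : is_lift (a + w + z) (nlift (a + w) + nlift z).
  by rewrite -nliftD //; apply: is_lift_nlift; apply: indep3_1_add_notin awz.
have hWZ : is_lift (w + z) (nlift w + nlift z).
  by rewrite -nliftD //; apply: is_lift_nlift; apply: indep3_1_add_notin wz.
have a_comb u v : u - v = a -> pline u v (P' a).
  move=> e; rewrite -e; apply: in_span2_pline; last by rewrite e.
  by exists 1, (-1); rewrite mul1r mulN1r rpred1 rpredN rpred1.
have e2 : a + w + z - (w + z) = a by ring.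
have := pline_meet_diff AWZ (is_lift_pline (indep3_indep2 h) hA hW (a_comb _ _ (addrK w a)))
  (is_lift_pline (indep3_indep2_add3 h) hAZ hWZ (a_comb _ _ e2)).
rewrite (proj2 (is_lift_scalar a_s a0)) => /esym e.
have D0 : nlift (a + w) - nlift w != 0.
  have := indep3_comb_neq0 AWZ (rpred1 _) (rpredNr (rpred1 _)) (rpred0 _) (oner_neq0 _).
  by rewrite mul1r mulN1r mul0r addr0.
by have := (pcl_eq D0 (oner_neq0 _)).1 e; rewrite divr1.
Qed.

Definition t0 : K' := epsilon (inhabits 0) (fun t => t \notin k').

Lemma t0_notin : t0 \notin k'.
Proof.
apply: (epsilon_spec (inhabits 0) (fun t => t \notin k')).
exact: degree_ge3_notin hdeg'.
Qed.

(* [nlift] is meaningless on [k'], where [Phi] is instead defined by translating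
   by the fixed [t0 \notin k']. *)
Definition Phi x := if x \in k' then nlift (x + t0) - nlift t0 else nlift x.

Lemma Phi_notin x : x \notin k' -> Phi x = nlift x.
Proof. by rewrite /Phi => /negbTE ->. Qed.

Lemma nlift_addl a w : a \in k' -> w \notin k' -> nlift (a + w) = Phi a + nlift w.
Proof. by move=> a_s wn; rewrite /Phi a_s (nlift_translate a_s t0_notin wn) subrK. Qed.

Lemma Phi0 : Phi 0 = 0.
Proof. by rewrite /Phi rpred0 add0r subrr. Qed.

Lemma Phi_scalar a : a \in k' -> Phi a \in k.
Proof.
move=> a_s; have [-> | a0] := eqVneq a 0; first by rewrite Phi0 rpred0.
by rewrite /Phi a_s; case: (nlift_translate_scalar a_s a0 t0_notin).
Qed.

Lemma is_lift_Phi x : x != 0 -> is_lift x (Phi x).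
Proof.
move=> x0; have [x_s | xn] := boolP (x \in k'); last first.
  by rewrite Phi_notin //; apply: is_lift_nlift.
have [Phik Phix0] : Phi x \in k /\ Phi x != 0.
  by rewrite /Phi x_s; apply: nlift_translate_scalar x_s x0 t0_notin.
by split; rewrite // (proj2 (is_lift_scalar x_s x0)) pcl_scalar.
Qed.

Lemma nlift_add_span x u z : indep3 k' 1 x z -> in_span2 (s:=k') 1 x u ->
  nlift (u + z) = Phi u + nlift z.
Proof.
move=> xz su; have [_ zn] := indep3_1_notin xz.
have [u_s | un] := boolP (u \in k'); first exact: nlift_addl.
by rewrite Phi_notin // nliftD //; apply: indep3_1_span xz un su.
Qed.

Lemma PhiD_notin x y : x \notin k' -> y \notin k' -> Phi (x + y) = Phi x + Phi y.
Proof.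
move=> xn yn; have [xy | xy] := classic (indep3 k' 1 x y).
  by rewrite !Phi_notin ?nliftD ?(indep3_1_add_notin xy).
have [z xz] := degree_ge3_indep3_1 hdeg' xn.
have sy : in_span2 (s:=k') 1 x y by apply: not_indep3_span xy; apply/indep2_1E.
have x_yz : indep3 k' 1 x (y + z).
  have [p [q [ps qs ey]]] := sy.
  by apply: indep3_replace xz ps qs (rpred1 _) (oner_neq0 _) _; rewrite ey; ring.
have := nlift_add_span xz (in_span2D (in_span2_r 1 x) sy).
rewrite -addrA nliftD // (nlift_add_span xz sy) (Phi_notin xn) addrA.
by move/addIr.
Qed.

Lemma PhiD : {morph Phi : x y / x + y}.
Proof.
move=> x y; have [x_s | xn] := boolP (x \in k'); have [y_s | yn] := boolP (y \in k').
- have ytn : y + t0 \notin k' by rewrite rpredDl // t0_notin.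
  rewrite [Phi (x + y)]/Phi rpredD // -addrA (nlift_addl x_s ytn).
  by rewrite (nlift_addl y_s t0_notin) addrA addrK.
- by rewrite (Phi_notin yn) Phi_notin ?rpredDl // nlift_addl.
- by rewrite addrC (addrC (Phi x)) (Phi_notin xn) Phi_notin ?rpredDl // nlift_addl.
- exact: PhiD_notin.
Qed.

Lemma Phi1 : Phi 1 = 1.
Proof.
have [_ hT h1T] := nliftP t0_notin.
have tn : 1 + t0 \notin k' by rewrite rpredDl ?rpred1 ?t0_notin.
have := is_lift_Phi (notin_neq0 tn); rewrite PhiD (Phi_notin t0_notin) => h.
have [c [cs _ e]] := is_lift_proportional h h1T.
have UV : indep2 k (nlift t0) 1.
  apply: lift_indep2 hT is_lift1 (indep2_pcl_neq _).
  exact/indep2_sym/indep2_1E/t0_notin.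
apply: (indep2_sum_scale UV (Phi_scalar (rpred1 _)) cs).
by rewrite mulr1 addrC e addrC.
Qed.

Lemma PhiM_notin x y : x \notin k' -> y != 0 -> Phi (x * y) = Phi x * Phi y.
Proof.
move=> xn y0; have x0 := notin_neq0 xn.
have x1n : 1 + x \notin k' by rewrite rpredDl ?rpred1.
have x10 := notin_neq0 x1n.
have [hx hy] := (is_lift_Phi x0, is_lift_Phi y0).
have [c [cs _ e1]] :=
  is_lift_proportional (is_lift_Phi (mulf_neq0 x0 y0)) (is_liftM x0 y0 hx hy).
have [d [ds _ e2]] := is_lift_proportional (is_lift_Phi (mulf_neq0 x10 y0))
  (is_liftM x10 y0 (is_lift_Phi x10) hy).
rewrite mulrDl mul1r !PhiD Phi1 e1 in e2.
have UV : indep2 k (Phi y) (Phi x * Phi y).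
  apply: lift_indep2 hy (is_liftM x0 y0 hx hy) _.
  apply/eqP => /(pcl_eq y0 (mulf_neq0 x0 y0)).
  by rewrite invfM mulrCA mulfV // mulr1 rpredV; apply/negP.
by rewrite e1 (indep2_sum_scale UV cs ds) ?mul1r // e2; ring.
Qed.

Lemma PhiM : {morph Phi : x y / x * y}.
Proof.
move=> x y; have [-> | y0] := eqVneq y 0; first by rewrite mulr0 Phi0 mulr0.
have [x_s | xn] := boolP (x \in k'); last exact: PhiM_notin.
have xtn : x + t0 \notin k' by rewrite rpredDl // t0_notin.
have := PhiM_notin xtn y0; rewrite mulrDl !PhiD (PhiM_notin t0_notin y0) mulrDl.
by move/addIr.
Qed.

Lemma PhiB : {morph Phi : x y / x - y}.
Proof.
move=> x y; rewrite PhiD; congr (_ + _).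
by apply: (addrI (Phi y)); rewrite -PhiD !subrr Phi0.
Qed.

Definition Phi_rmorphism : {rmorphism K' -> K} :=
  HB.pack Phi (GRing.isZmodMorphism.Build K' K Phi PhiB)
    (GRing.isMonoidMorphism.Build K' K Phi (Phi1, PhiM)).

Lemma Phi_onto y : y \in k -> exists2 x, x \in k' & Phi x = y.
Proof.
move=> ys; have [-> | y0] := eqVneq y 0; first by exists 0; rewrite ?rpred0 ?Phi0.
have hT := is_lift_nlift t0_notin.
have t01 : indep2 k' 1 t0 by apply/indep2_1E/t0_notin.
have UV : indep2 k 1 (nlift t0) := lift_indep2 is_lift1 hT (indep2_pcl_neq t01).
have n : y * 1 + 1 * nlift t0 != 0.
  by apply/eqP => /(UV _ _ ys (rpred1 _)) [_ /eqP]; rewrite oner_eq0.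
have [p [[a [b [a_s bs nab ->]]] e]] :
    exists p, pline 1 t0 p /\ P (y * 1 + 1 * nlift t0) = phi p.
  by apply/(phi_pline t01 is_lift1 hT); exists y, 1; rewrite rpred1.
have [c [cs _ ec]] := is_lift_proportional (conj n (esym e)) (is_lift_Phi nab).
rewrite PhiD !PhiM Phi1 (Phi_notin t0_notin) in ec.
have [ya cb] : y = c * Phi a /\ 1 = c * Phi b.
  by apply: (indep2_coefE UV); rewrite ?rpredM ?Phi_scalar ?rpred1 // ec; ring.
have Phib0 : Phi b != 0.
  by apply/eqP => b0; move: cb; rewrite b0 mulr0 => /eqP; rewrite oner_eq0.
have b0 : b != 0 by apply: contraNneq Phib0 => ->; rewrite Phi0.
have PhiV : Phi b^-1 = (Phi b)^-1 := fmorphV Phi_rmorphism b.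
exists (a / b); first by rewrite rpred_div.
have Vc : (Phi b)^-1 = c by apply: (mulIf Phib0); rewrite mulVf.
by rewrite PhiM PhiV Vc ya mulrC.
Qed.

Lemma Phi_unique (Psi : {rmorphism K' -> K}) : lifts phi Psi -> Psi =1 Phi.
Proof.
move=> hPsi.
have agree x : x \notin k' -> Psi x = Phi x.
  move=> xn; have x0 := notin_neq0 xn.
  have x1n : 1 + x \notin k' by rewrite rpredDl ?rpred1.
  have lift_Psi z : z != 0 -> is_lift z (Psi z).
    by move=> z0; rewrite /is_lift fmorph_eq0 hPsi.
  have [c [cs _ ec]] := is_lift_proportional (lift_Psi x x0) (is_lift_Phi x0).
  have [d [ds _ ed]] := is_lift_proportional (lift_Psi _ (notin_neq0 x1n))
    (is_lift_Phi (notin_neq0 x1n)).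
  rewrite rmorphD rmorph1 PhiD Phi1 ec in ed.
  have UV : indep2 k 1 (Phi x).
    by apply: lift_indep2 is_lift1 (is_lift_Phi x0) (indep2_pcl_neq _); apply/indep2_1E.
  by rewrite ec (indep2_sum_scale UV cs ds ed) mul1r.
move=> x; have [x_s | xn] := boolP (x \in k'); last exact: agree.
have xtn : x + t0 \notin k' by rewrite rpredDl // t0_notin.
by apply: (addIr (Phi t0)); rewrite -PhiD -(agree _ xtn) -(agree _ t0_notin) rmorphD.
Qed.

End NormalisedLift.

End Lifting.

Theorem mainTheorem18 (K : fieldType) (k : divringClosed K)
    (K' : fieldType) (k' : divringClosed K')
    (hdeg : degree_ge3 k) (hdeg' : degree_ge3 k')
    (phi : Proj k' -> Proj k)
    (hhom : is_group_hom phi) (hemb : proj_embedding phi) :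
  exists Phi : {rmorphism K' -> K},
    (lifts phi Phi /\ restricts_iso k k' Phi) /\
    forall Psi : {rmorphism K' -> K},
      lifts phi Psi -> restricts_iso k k' Psi -> Psi =1 Phi.
Proof.
exists (Phi_rmorphism hhom hemb hdeg'); split; first split.
- by move=> x x0; case: (is_lift_Phi hhom hemb hdeg' x0).
- by split; [exact: Phi_scalar | exact: Phi_onto].
- by move=> Psi hPsi _; exact: Phi_unique.
Qed.
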